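(* Let $K$ be a commutative ring, $R$ a $K$-algebra, $\mathcal{G}$ a finite groupoid and $\beta=(\{E_g\}_{g\in\mathcal G},\{\beta_g\}_{g\in\mathcal G})$ a unital action of $\mathcal G$ on $R$ such that $R=\bigoplus_{e\in\mathcal G_0}E_e$ and $R$ is a $\beta$-Galois extension of $R^\beta$. Let $H$ be a subgroupoid of $\mathcal G$ and put $R_H=\bigoplus_{e\in H_0}E_e$, where $H_0=H\cap\mathcal G_0$. Then $\beta_H=(\{E_h\}_{h\in H},\{\beta_h:E_{h^{-1}}\to E_h\}_{h\in H})$ is an action of $H$ on $R_H$, and $R_H$ is a $\beta_H$-Galois extension of $(R_H)^{\beta_H}$.
   Context: All rings and algebras are associative and unital. A groupoid is a nonempty set $\mathcal G$ with a partially defined associative multiplication in which every $g$ has an inverse $g^{-1}$, a left identity $r(g)=gg^{-1}$ and a right identity $d(g)=g^{-1}g$; the product $gh$ is defined iff $d(g)=r(h)$. $\mathcal G_0$ denotes the set of identities of $\mathcal G$. A subgroupoid is a nonempty subset $H$ closed under inverses and under those products that are defined. A unital action of $\mathcal G$ on a $K$-algebra $R$ is a pair $\beta=(\{E_g\},\{\beta_g\})$ where for each $g\in\mathcal G$, $E_g=E_{r(g)}$ is an ideal of $R$ which is a unital ring with identity $1_g$ (so $1_g=1_{r(g)}$ and $1_{g^{-1}}=1_{d(g)}$), $\beta_g:E_{g^{-1}}\to E_g$ is an isomorphism of $K$-algebras, $\beta_e=\mathrm{id}_{E_e}$ for all $e\in\mathcal G_0$, and $\beta_g(\beta_h(x))=\beta_{gh}(x)$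 whenever $d(g)=r(h)$ and $x\in E_{h^{-1}}$. For a subgroupoid $H$ acting on a ring $A$ via $\beta_H$, $A^{\beta_H}=\{a\in A:\beta_h(a1_{h^{-1}})=a1_h \text{ for all } h\in H\}$; $R^\beta=R^{\beta_{\mathcal G}}$. $A$ is a $\beta_H$-Galois extension of $A^{\beta_H}$ if $H$ is finite and there exist $x_1,\dots,x_m,y_1,\dots,y_m\in A$ with $\sum_{i=1}^m x_i\beta_h(y_i1_{h^{-1}})=1_h$ if $h\in H_0$ and $=0$ if $h\in H\setminus H_0$. *)

From HB Require Import structures.
From mathcomp Require Import all_boot all_order all_algebra.
Set Implicit Arguments. Unset Strict Implicit. Unset Printing Implicit Defensive.
Import GRing.Theory.
Local Open Scope ring_scope.

(* A finite groupoid: a finite type G with a product gmul (meaningful only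
   when gd g = gr h) and an inversion ginv; gr g := g g^-1, gd g := g^-1 g. *)
Record groupoid (G : finType) := Groupoid {
  gmul : G -> G -> G;
  ginv : G -> G }.

Section GroupoidDefs.
Variables (G : finType) (Gd : groupoid G).
Definition gr (g : G) : G := gmul Gd g (ginv Gd g).
Definition gd (g : G) : G := gmul Gd (ginv Gd g) g.

Definition is_groupoid : Prop :=
  (forall g h, gd g = gr h -> gr (gmul Gd g h) = gr g) /\
  (forall g h, gd g = gr h -> gd (gmul Gd g h) = gd h) /\
  (forall g h k, gd g = gr h -> gd h = gr k ->
      gmul Gd (gmul Gd g h) k = gmul Gd g (gmul Gd h k)) /\
  (forall g, gd (gr g) = gr g /\ gmul Gd (gr g) g = g) /\
  (forall g, gr (gd g) = gd g /\ gmul Gd g (gd g) = g) /\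
  (forall g, gd (ginv Gd g) = gr g /\ gr (ginv Gd g) = gd g).

Definition gid : {set G} := [set gr g | g : G].

Definition subgroupoid (H : {set G}) : Prop :=
  [/\ H != set0,
      (forall h, h \in H -> ginv Gd h \in H)
    & (forall g h, g \in H -> h \in H -> gd g = gr h -> gmul Gd g h \in H)].

Definition sub_id (H : {set G}) : {set G} := H :&: gid.
End GroupoidDefs.

Section ActionDefs.
Variables (K : comPzRingType) (R : pzRingType) (phi : {rmorphism K -> R}).
Variables (G : finType) (Gd : groupoid G).

Definition ideal_of (A I : pred R) : Prop :=
  [/\ {subset I <= A}, 0 \in I,
      (forall x y, x \in I -> y \in I -> x - y \in I)
    & (forall a x, a \in A -> x \in I -> a * x \in I /\ x * a \in I)].

Definition unit_of (I : pred R) (e : R) : Prop :=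
  e \in I /\ (forall x, x \in I -> e * x = x /\ x * e = x).

Definition kalg_iso (I J : pred R) (f : R -> R) : Prop :=
  (forall x, x \in I -> f x \in J) /\
  (forall x y, x \in I -> y \in I -> f (x + y) = f x + f y) /\
  (forall x y, x \in I -> y \in I -> f (x * y) = f x * f y) /\
  (forall k x, x \in I -> f (phi k * x) = phi k * f x) /\
  {in I &, injective f} /\
  (forall y, y \in J -> exists2 x, x \in I & f x = y).

(* beta = ({E_g}, {beta_g}) is a unital action of the subgroupoid D on the
   ring A (a subset of R closed under addition and product); one g is the identity 1_g of E_g *)
Definition unital_action (D : {set G}) (A : pred R) (E : G -> pred R)
    (one : G -> R) (beta : G -> R -> R) : Prop :=
  (forall g, g \in D -> E g =1 E (gr Gd g)) /\
  (forall g, g \in D -> ideal_of A (E g)) /\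
  (forall g, g \in D -> unit_of (E g) (one g)) /\
  (forall g, g \in D -> kalg_iso (E (ginv Gd g)) (E g) (beta g)) /\
  (forall e, e \in sub_id Gd D -> forall x, x \in E e -> beta e x = x) /\
  (forall g h, g \in D -> h \in D -> gd Gd g = gr Gd h ->
     forall x, x \in E (ginv Gd h) ->
       beta g (beta h x) = beta (gmul Gd g h) x).

Definition galois_ext (D : {set G}) (A : pred R) (one : G -> R)
    (beta : G -> R -> R) : Prop :=
  exists m (x y : 'I_m -> R),
    [/\ (forall i, x i \in A), (forall i, y i \in A) &
      forall h, h \in D ->
        \sum_(i < m) x i * beta h (y i * one (ginv Gd h)) =
          if h \in gid Gd then one h else 0].

Definition direct_sum (A : pred R) (S : {set G}) (E : G -> pred R) : Prop :=
  (forall a, a \in A <->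
     exists2 f : G -> R, (forall e, e \in S -> f e \in E e) &
       a = \sum_(e in S) f e) /\
  (forall f : G -> R, (forall e, e \in S -> f e \in E e) ->
     \sum_(e in S) f e = 0 -> forall e, e \in S -> f e = 0).
End ActionDefs.

From HB Require Import structures.
From mathcomp Require Import all_boot all_order all_algebra.
Set Implicit Arguments. Unset Strict Implicit. Unset Printing Implicit Defensive.
Import GRing.Theory.
Local Open Scope ring_scope.

(* Put p := sum_{e in H_0} 1_e.  Because R is the direct sum of the ideals
   E_e (e in G_0), distinct identities are orthogonal, so p acts as a left
   unit on every E_e with e in H_0, hence on every E_h = E_{r(h)}, h in H
   (r(h) lies in H_0).  The proof then has two independent halves:
   - the action part is a pure restriction: all axioms of beta pass to H,
     and each E_h is an ideal of R_H because E_h = E_{r(h)} is a summand;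
   - the Galois part uses the "corner" coordinates x_i p, p y_i, which lie
     in R_H = p R = R p; since p is a left unit on E_h and E_{h^-1}, the
     Galois sums over H are unchanged. *)

Section DirectSums.
Variables (R : pzRingType) (G : finType) (E : G -> pred R).

Lemma ideal_mull (A I : pred R) a x :
  ideal_of A I -> a \in A -> x \in I -> a * x \in I.
Proof. by move=> [_ _ _ M] aA xI; case: (M a x aA xI). Qed.

Lemma ideal_mulr (A I : pred R) a x :
  ideal_of A I -> a \in A -> x \in I -> x * a \in I.
Proof. by move=> [_ _ _ M] aA xI; case: (M a x aA xI). Qed.

Lemma direct_sum_summand (A : pred R) (S : {set G}) e0 x :
  direct_sum A S E -> (forall e, e \in S -> (0 : R) \in E e) ->
  e0 \in S -> x \in E e0 -> x \in A.
Proof.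
move=> [HA _] E0 e0S xE; apply/HA.
exists (fun e => if e == e0 then x else 0).
  by move=> e eS; case: eqP => [->|_] //; apply: E0.
rewrite (bigD1 e0) //= eqxx big1 ?addr0 // => e /andP[_ /negPf ->] //.
Qed.

Lemma direct_sum_disjoint (A : pred R) (S : {set G}) e1 e2 w :
  direct_sum A S E -> (forall e, e \in S -> ideal_of A (E e)) ->
  e1 \in S -> e2 \in S -> e1 != e2 -> w \in E e1 -> w \in E e2 -> w = 0.
Proof.
move=> [_ Hdir] HI e1S e2S ne w1 w2.
pose f e := if e == e1 then w else if e == e2 then - w else 0.
have fE e : e \in S -> f e \in E e.
  move=> eS; rewrite /f; case: eqP => [->//|_].
  case: eqP => [->|_]; last by case: (HI e eS).
  by have [_ E0 Esub _] := HI e2 e2S; rewrite -sub0r; apply: Esub.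
have := Hdir f fE _ e1 e1S; rewrite /f eqxx; apply.
rewrite (bigD1 e1) //= (bigD1 e2) /=; last by rewrite e2S eq_sym.
rewrite big1 => [|e /andP[/andP[_ /negPf ->] /negPf ->] //].
by rewrite (eq_sym e2 e1) (negPf ne) !eqxx addr0 subrr.
Qed.

Lemma units_sum_mull (S T : {set G}) (one : G -> R) e0 w :
  direct_sum predT S E -> (forall e, e \in S -> ideal_of predT (E e)) ->
  (forall e, e \in S -> unit_of (E e) (one e)) ->
  T \subset S -> e0 \in T -> w \in E e0 ->
  (\sum_(e in T) one e) * w = w.
Proof.
move=> Hd HI Hun /subsetP TS e0T wE.
have e0S := TS e0 e0T.
rewrite mulr_suml (bigD1 e0) //= big1 ?addr0; first by case: (Hun e0 e0S) => _ /(_ w wE) [].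
move=> e /andP[eT ne]; have eS := TS e eT.
apply: (direct_sum_disjoint Hd HI eS e0S ne).
  by apply: ideal_mulr (HI e eS) _ (proj1 (Hun e eS)).
by apply: ideal_mull (HI e0 e0S) _ wE.
Qed.

Lemma units_sum_mem (A : pred R) (T : {set G}) (one : G -> R) a :
  direct_sum A T E -> (forall e, e \in T -> ideal_of predT (E e)) ->
  (forall e, e \in T -> unit_of (E e) (one e)) ->
  a * (\sum_(e in T) one e) \in A /\ (\sum_(e in T) one e) * a \in A.
Proof.
move=> [HA _] HI Hun; split; apply/HA.
- exists (fun e => a * one e); last by rewrite mulr_sumr.
  by move=> e eT; apply: ideal_mull (HI e eT) _ (proj1 (Hun e eT)).
- exists (fun e => one e * a); last by rewrite mulr_suml.
  by move=> e eT; apply: ideal_mulr (HI e eT) _ (proj1 (Hun e eT)).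
Qed.
End DirectSums.

Lemma gr_sub_id (G : finType) (Gd : groupoid G) (H : {set G}) h :
  is_groupoid Gd -> subgroupoid Gd H -> h \in H -> gr Gd h \in sub_id Gd H.
Proof.
move=> [_ [_ [_ [_ [_ Hinv]]]]] [_ HHinv HHmul] hH.
rewrite inE; apply/andP; split; last exact: imset_f.
by apply: HHmul => //; [apply: HHinv | rewrite (proj2 (Hinv h))].
Qed.

Section Restriction.
Variables (K : comPzRingType) (R : pzRingType) (phi : {rmorphism K -> R}).
Variables (G : finType) (Gd : groupoid G).
Variables (E : G -> pred R) (one : G -> R) (beta : G -> R -> R).

Lemma unital_action_restrict (D D' : {set G}) (A A' : pred R) :
  D' \subset D -> {subset A' <= A} ->
  (forall g, g \in D' -> {subset E g <= A'}) ->
  unital_action phi Gd D A E one beta -> unital_action phi Gd D' A' E one beta.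
Proof.
move=> /subsetP D'D A'A EA' [HE [Hid [Hun [Hiso [Hidn Hcomp]]]]].
have sub_idD : {subset sub_id Gd D' <= sub_id Gd D}.
  by apply/subsetP; apply: setSI; apply/subsetP.
split; first by move=> g /D'D; apply: HE.
split.
  move=> g gD'; have [_ E0 Esub M] := Hid g (D'D g gD').
  by split=> // [x /(EA' g gD') // | a x /A'A]; apply: M.
split; first by move=> g /D'D; apply: Hun.
split; first by move=> g /D'D; apply: Hiso.
split; first by move=> e /sub_idD; apply: Hidn.
by move=> g h /D'D gD /D'D hD; apply: Hcomp.
Qed.

Lemma galois_ext_corner (D D' : {set G}) (A A' : pred R) (p : R) :
  D' \subset D ->
  (forall a, a \in A -> a * p \in A' /\ p * a \in A') ->
  (forall h a, h \in D' -> a \in A ->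
     p * (a * one (ginv Gd h)) = a * one (ginv Gd h) /\
     p * beta h (a * one (ginv Gd h)) = beta h (a * one (ginv Gd h))) ->
  galois_ext Gd D A one beta -> galois_ext Gd D' A' one beta.
Proof.
move=> /subsetP D'D pA punit [m [x [y [xA yA Hs]]]].
exists m, (fun i => x i * p), (fun i => p * y i); split.
- by move=> i; case: (pA _ (xA i)).
- by move=> i; case: (pA _ (yA i)).
move=> h hD'; rewrite -(Hs h (D'D h hD')); apply: eq_bigr => i _.
have [py pb] := punit h (y i) hD' (yA i).
by rewrite -(mulrA p) py -mulrA pb.
Qed.
End Restriction.

Theorem mainTheorem1 (K : comPzRingType) (R : pzRingType)
  (phi : {rmorphism K -> R}) (phi_central : forall k x, phi k * x = x * phi k)
  (G : finType) (Gd : groupoid G) (HGd : is_groupoid Gd)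
  (E : G -> pred R) (one : G -> R) (beta : G -> R -> R)
  (Hact : unital_action phi Gd [set: G] predT E one beta)
  (Hsum : direct_sum predT (gid Gd) E)
  (Hgal : galois_ext Gd [set: G] predT one beta)
  (H : {set G}) (HH : subgroupoid Gd H)
  (RH : pred R) (HRH : direct_sum RH (sub_id Gd H) E) :
  unital_action phi Gd H RH E one beta /\ galois_ext Gd H RH one beta.
Proof.
have [HE [Hid [Hun [Hiso _]]]] := Hact.
have HI e : e \in gid Gd -> ideal_of predT (E e) by move=> _; apply: Hid; rewrite inE.
have HU e : e \in gid Gd -> unit_of (E e) (one e) by move=> _; apply: Hun; rewrite inE.
have H0G : sub_id Gd H \subset gid Gd := subsetIr _ _.
have HIH e (eH : e \in sub_id Gd H) := HI e (subsetP H0G e eH).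
have HUH e (eH : e \in sub_id Gd H) := HU e (subsetP H0G e eH).
have Er h w : w \in E h -> w \in E (gr Gd h).
  by rewrite -!topredE /= (HE h (in_setT h)).
have EH h w : h \in H -> w \in E h -> w \in RH.
  move=> hH /Er; apply: direct_sum_summand HRH _ (gr_sub_id HGd HH hH).
  by move=> e eH; case: (HIH e eH).
pose p := \sum_(e in sub_id Gd H) one e.
have p_unit h w : h \in H -> w \in E h -> p * w = w.
  move=> hH /Er; exact: units_sum_mull Hsum HI HU H0G (gr_sub_id HGd HH hH).
split.
  apply: unital_action_restrict Hact; [exact: subsetT | by [] | by move=> g gH w; apply: EH].
apply: galois_ext_corner Hgal; first exact: subsetT.
  by move=> a _; apply: units_sum_mem HRH HIH HUH.
move=> h a hH _; have hiH : ginv Gd h \in H by case: HH => _ ->.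
have wE : a * one (ginv Gd h) \in E (ginv Gd h).
  by apply: ideal_mull (Hid _ (in_setT _)) _ (proj1 (Hun _ (in_setT _))).
split; first exact: p_unit hiH wE.
by apply: p_unit hH _; case: (Hiso h (in_setT h)) => /(_ _ wE).
Qed.
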